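(* Let $\mathcal{Q}$ be a finite poset equipped with the discrete $\sigma$-algebra (all subsets). Then the map \[ \psi\colon \mu\longmapsto \int_{\mathcal{Q}}\dim(-)\,d\mu \] from the set of measures on the discrete $\sigma$-algebra of $\mathcal{Q}$ to the set of additive amplitudes on $\mathrm{Vect}^{\mathcal{Q}}$ is a bijection. That is, for every additive amplitude $\alpha$ on $\mathrm{Vect}^{\mathcal{Q}}$ there is a unique measure $\mu$ on $\mathcal{Q}$ with $\alpha(M)=\int_{\mathcal{Q}}\dim M(q)\,d\mu(q)$ for all $M$.
   Context: $\mathrm{Vect}$ is the category of finite-dimensional vector spaces over a fixed field, and $\mathrm{Vect}^{\mathcal{Q}}$ is the (abelian) category of functors $\mathcal{Q}\to\mathrm{Vect}$ (persistence modules), with $\mathcal{Q}$ viewed as a category. For an abelian category $\mathcal{A}$, an amplitude is a function $\alpha\colon\operatorname{ob}\mathcal{A}\to[0,\infty]$ with $\alpha(0)=0$ such that for every short exact sequence $0\to A\to B\to C\to 0$, $\alpha(A)\le\alpha(B)$, $\alpha(C)\le\alpha(B)$ and $\alpha(B)\le\alpha(A)+\alpha(C)$; it is additive if always $\alpha(B)=\alpha(A)+\alpha(C)$. *)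

From HB Require Import structures.
From mathcomp Require Import all_boot all_order all_algebra.
From mathcomp Require Import all_classical all_reals all_analysis.

Set Implicit Arguments.
Unset Strict Implicit.
Unset Printing Implicit Defensive.

Import Order.TTheory GRing.Theory Num.Theory.
Local Open Scope ring_scope.

(* Persistence modules: functors Q -> Vect (f.d. vector spaces over F). *)
(* The vector space at q is F^(pdim q) (row vectors 'rV[F]_(pdim q)),   *)
(* and the structure map M(q <= r) acts by right multiplication         *)
(* v |-> v *m pmap q r h.                                               *)
Record pmod (F : fieldType) (d : Order.disp_t) (Q : finPOrderType d) := PMod {
  pdim : Q -> nat;
  pmap : forall q r : Q, (q <= r)%O -> 'M[F]_(pdim q, pdim r);
  pmap_id : forall (q : Q) (h : (q <= q)%O), pmap h = 1%:M;
  pmap_comp : forall (q r s : Q) (h1 : (q <= r)%O) (h2 : (r <= s)%O)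
      (h3 : (q <= s)%O), pmap h3 = pmap h1 *m pmap h2
}.

Definition is_pmorph (F : fieldType) (d : Order.disp_t) (Q : finPOrderType d)
    (M N : pmod F Q) (f : forall q : Q, 'M[F]_(pdim M q, pdim N q)) : Prop :=
  forall (q r : Q) (h : (q <= r)%O), pmap M h *m f r = f q *m pmap N h.

(* Short exact sequence 0 -> A --f--> B --g--> C -> 0 in Vect^Q
   (exactness is checked pointwise, as in a functor category):
   f_q injective, g_q surjective, image f_q = kernel g_q. *)
Definition is_ses (F : fieldType) (d : Order.disp_t) (Q : finPOrderType d)
    (A B C : pmod F Q) : Prop :=
  exists (f : forall q : Q, 'M[F]_(pdim A q, pdim B q))
         (g : forall q : Q, 'M[F]_(pdim B q, pdim C q)),
    [/\ is_pmorph f, is_pmorph g,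
        forall q, row_free (f q),
        forall q, row_full (g q) &
        forall q, (f q == kermx (g q))%MS].

Definition is_zero_pmod (F : fieldType) (d : Order.disp_t) (Q : finPOrderType d)
    (M : pmod F Q) : Prop := forall q, pdim M q = 0%N.

Local Open Scope ereal_scope.

Definition is_amplitude (F : fieldType) (R : realType) (d : Order.disp_t)
    (Q : finPOrderType d) (alpha : pmod F Q -> \bar R) : Prop :=
  [/\ forall M, 0 <= alpha M,
      forall M, is_zero_pmod M -> alpha M = 0 &
      forall A B C, is_ses A B C ->
        [/\ alpha A <= alpha B, alpha C <= alpha B &
            alpha B <= alpha A + alpha C]].

Definition is_additive_amplitude (F : fieldType) (R : realType)
    (d : Order.disp_t) (Q : finPOrderType d) (alpha : pmod F Q -> \bar R)
    : Prop :=
  is_amplitude alpha /\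
  forall A B C, is_ses A B C -> alpha B = alpha A + alpha C.

Local Close Scope ereal_scope.

(* MathComp-Analysis measurable types must be pointed, so a point q0   *)
(* of Q is used.                               *)
Definition discr (d : Order.disp_t) (Q : finPOrderType d) (q0 : Q) : Type := Q.
Arguments discr {d Q} q0.
Section Discr.
Context (d : Order.disp_t) (Q : finPOrderType d) (q0 : Q).
HB.instance Definition _ := Choice.on (discr q0).
HB.instance Definition _ := isPointed.Build (discr q0) q0.
HB.instance Definition _ := @isMeasurable.Build default_measure_display
  (discr q0) discrete_measurable discrete_measurable0
  discrete_measurableC discrete_measurableU.
End Discr.

Lemma discr_measurableE (d : Order.disp_t) (Q : finPOrderType d) (q0 : Q)
  (A : set (discr q0)) : measurable A.
Proof. by []. Qed.

(* An additive amplitude is determined by its values on the one-dimensional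
   skyscraper modules S_q.  If q is maximal in the support of M, restricting M
   to q gives a submodule whose quotient is the restriction of M to the other
   points, and the restriction at q is an iterated extension of copies of S_q;
   so by induction on the total dimension, two additive amplitudes that agree
   on every S_q agree everywhere.  Integrating dim against mu is an additive
   amplitude taking the value mu{q} at S_q; hence alpha is represented by the
   measure sum_q alpha(S_q) delta_q, and only by it, since a measure on the
   finite discrete space is determined by its values on points. *)

From Pilot Require Import Defs.
From HB Require Import structures.
From mathcomp Require Import all_boot all_order all_algebra.
From mathcomp Require Import all_classical all_reals all_analysis.
From mathcomp Require Import zify.

Set Implicit Arguments.
Unset Strict Implicit.
Unset Printing Implicit Defensive.

Import Order.TTheory GRing.Theory Num.Theory.

Local Open Scope ring_scope.

Lemma mx_eq_nrows0 (R : Type) m n (A B : 'M[R]_(m, n)) : m = 0%N -> A = B.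
Proof. by move=> m0; apply/matrixP => i; suff: (i < 0)%N by []; rewrite -m0. Qed.

Lemma mx_eq_ncols0 (R : Type) m n (A B : 'M[R]_(m, n)) : n = 0%N -> A = B.
Proof. by move=> n0; apply/matrixP => i j; suff: (j < 0)%N by []; rewrite -n0. Qed.

Section PersistenceModules.
Variables (F : fieldType) (d : Order.disp_t) (Q : finPOrderType d).
Implicit Types (A B C M : pmod F Q) (q r s : Q).

Lemma ses_mx m n p : n = (m + p)%N ->
  {fg : 'M[F]_(m, n) * 'M[F]_(n, p) |
    [/\ row_free fg.1, row_full fg.2 & (fg.1 == kermx fg.2)%MS]}.
Proof.
move=> def_n; pose g : 'M[F]_(n, p) := (pid_mx p : 'M[F]_(p, n))^T.
have rank_g : \rank g = p by rewrite mxrank_tr rank_pid_mx // def_n leq_addl.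
have rank_ker : \rank (kermx g) = m by rewrite mxrank_ker rank_g def_n addnK.
exists (castmx (rank_ker, erefl n) (row_base (kermx g)), g); split => /=.
- by rewrite /row_free eqmx_cast eq_row_base rank_ker.
- by rewrite /row_full rank_g.
- by apply/eqmxP; apply: eqmx_trans (eqmx_cast _ _) (eq_row_base _).
Qed.

Lemma ses_pdim A B C : is_ses A B C -> forall q, pdim B q = (pdim A q + pdim C q)%N.
Proof.
case=> f [g [_ _ free_f full_g ker_g]] q.
have := free_f q; have := full_g q; have := eqmx_rank (ker_g q).
rewrite /row_free /row_full mxrank_ker => rank_f /eqP rank_g /eqP.
by rewrite rank_f rank_g => <-; rewrite subnK // -rank_g rank_leq_row.
Qed.

Definition total_dim M : nat := \sum_q pdim M q.

Lemma total_dim_ses A B C :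
  is_ses A B C -> total_dim B = (total_dim A + total_dim C)%N.
Proof. by move=> ses; rewrite -big_split; apply: eq_bigr => q _; apply: ses_pdim. Qed.

Lemma pdim_le_total_dim M q : (pdim M q <= total_dim M)%N.
Proof. by rewrite /total_dim (bigD1 q) //= leq_addr. Qed.

Definition supported_at M q := forall r, r != q -> pdim M r = 0%N.

Lemma supported_at_morph A B q (f : forall r, 'M[F]_(pdim A r, pdim B r)) :
  supported_at A q -> supported_at B q -> is_pmorph f.
Proof.
move=> suppA suppB r s le_rs.
have [er | rq] := eqVneq r q; last exact/mx_eq_nrows0/suppA.
have [es | sq] := eqVneq s q; last exact/mx_eq_ncols0/suppB.
by subst r s; rewrite !pmap_id mul1mx mulmx1.
Qed.

Lemma supported_at_ses A B C q :
  supported_at A q -> supported_at B q -> supported_at C q ->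
  pdim B q = (pdim A q + pdim C q)%N -> is_ses A B C.
Proof.
move=> suppA suppB suppC dimBq.
have dimB r : pdim B r = (pdim A r + pdim C r)%N.
  by have [-> // | rq] := eqVneq r q; rewrite suppA ?suppB ?suppC.
exists (fun r => (sval (ses_mx (dimB r))).1), (fun r => (sval (ses_mx (dimB r))).2).
split; [exact: supported_at_morph suppA suppB | exact: supported_at_morph suppB suppC |
         move=> r; by case: (svalP (ses_mx (dimB r))) ..].
Qed.

Definition sky_dim q k r : nat := if r == q then k else 0%N.

Definition sky_map q k r s (le_rs : (r <= s)%O) :
  'M[F]_(sky_dim q k r, sky_dim q k s) := pid_mx k.

Lemma sky_dim_le q k r : (sky_dim q k r <= k)%N.
Proof. by rewrite /sky_dim; case: ifP. Qed.

Lemma sky_map_id q k r (le_rr : (r <= r)%O) : sky_map q k le_rr = 1%:M.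
Proof.
apply/matrixP => i j.
by rewrite !mxE (leq_trans (ltn_ord i) (sky_dim_le _ _ _)) andbT.
Qed.

Lemma sky_map_comp q k r s t (le_rs : (r <= s)%O) (le_st : (s <= t)%O)
    (le_rt : (r <= t)%O) :
  sky_map q k le_rt = sky_map q k le_rs *m sky_map q k le_st.
Proof.
rewrite /sky_map mul_pid_mx !minnn (minn_idPl (sky_dim_le _ _ _)).
have [-> | sq] := eqVneq s q; first by rewrite /sky_dim eqxx.
have sky_dim0 x : x != q -> sky_dim q k x = 0%N by rewrite /sky_dim => /negbTE->.
rewrite (sky_dim0 s sq) pid_mx_0.
have [er | rq] := eqVneq r q; last exact/mx_eq_nrows0/sky_dim0.
have [et | tq] := eqVneq t q; last exact/mx_eq_ncols0/sky_dim0.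
by subst r t; rewrite (@le_anti _ _ s q) ?le_rs ?le_st ?eqxx in sq.
Qed.

Definition skyscraper q k : pmod F Q :=
  PMod (@sky_map_id q k) (@sky_map_comp q k).

Lemma skyscraper_supported q k : supported_at (skyscraper q k) q.
Proof. by move=> r /negbTE rq; rewrite /= /sky_dim rq. Qed.

Lemma pdim_skyscraper q k : pdim (skyscraper q k) q = k.
Proof. by rewrite /= /sky_dim eqxx. Qed.

Section Restriction.
Variables (M : pmod F Q) (P : pred Q).

Definition restr_dim r : nat := if P r then pdim M r else 0%N.

Lemma restr_dim_le r : (restr_dim r <= pdim M r)%N.
Proof. by rewrite /restr_dim; case: ifP. Qed.

Definition restr_sel r : 'M[F]_(restr_dim r, pdim M r) := pid_mx (restr_dim r).

Lemma restr_sel_mul_tr r : restr_sel r *m (restr_sel r)^T = 1%:M.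
Proof.
by rewrite tr_pid_mx mul_pid_mx !minnn (minn_idPr (restr_dim_le _)) pid_mx_1.
Qed.

Lemma restr_sel_tr_mul r : (restr_sel r)^T *m restr_sel r = if P r then 1%:M else 0.
Proof.
rewrite tr_pid_mx mul_pid_mx !minnn /restr_dim.
by case: (P r); [apply: pid_mx_1 | apply: pid_mx_0].
Qed.

Definition restr_map r s (le_rs : (r <= s)%O) : 'M[F]_(restr_dim r, restr_dim s) :=
  restr_sel r *m Defs.pmap M le_rs *m (restr_sel s)^T.

Lemma restr_map_id r (le_rr : (r <= r)%O) : restr_map le_rr = 1%:M.
Proof. by rewrite /restr_map pmap_id mulmx1 restr_sel_mul_tr. Qed.

Definition convex_in := forall p r s, (p <= r)%O -> (r <= s)%O ->
  P p -> P s -> ~~ P r -> pdim M r = 0%N \/ pdim M s = 0%N.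

Hypothesis convexP : convex_in.

Lemma restr_map_comp p r s (le_pr : (p <= r)%O) (le_rs : (r <= s)%O)
    (le_ps : (p <= s)%O) :
  restr_map le_ps = restr_map le_pr *m restr_map le_rs.
Proof.
rewrite /restr_map (pmap_comp M le_pr le_rs le_ps) !mulmxA.
rewrite -[_ *m (restr_sel r)^T *m restr_sel r]mulmxA restr_sel_tr_mul.
case Pr: (P r); first by rewrite mulmx1.
rewrite mulmx0 !mul0mx.
case Pp: (P p); last by apply: mx_eq_nrows0; rewrite /restr_dim Pp.
case Ps: (P s); last by apply: mx_eq_ncols0; rewrite /restr_dim Ps.
have [M0r | M0s] := convexP le_pr le_rs Pp Ps (negbT Pr).
  by rewrite [Defs.pmap M le_pr](mx_eq_ncols0 _ 0 M0r) mulmx0 !mul0mx.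
by apply: mx_eq_ncols0; rewrite /restr_dim Ps.
Qed.

Definition restr : pmod F Q := PMod restr_map_id restr_map_comp.

End Restriction.

Section RestrictionSes.
Variables (M : pmod F Q) (P : pred Q).

Definition up_closed_in :=
  forall r s, (r <= s)%O -> P r -> ~~ P s -> pdim M s = 0%N.

Hypothesis upP : up_closed_in.

Lemma up_closed_convex : convex_in M P.
Proof. by move=> p r s le_pr _ Pp _ /(upP le_pr Pp); left. Qed.

Lemma up_closed_convexC : convex_in M (predC P).
Proof. by move=> p r s _ le_rs _ /= nPs /negbNE Pr; right; apply: upP Pr nPs. Qed.

Lemma restr_ses : is_ses (restr up_closed_convex) M (restr up_closed_convexC).
Proof.
exists (restr_sel M P), (fun r => (restr_sel M (predC P) r)^T); split.
- move=> r s le_rs /=; rewrite /restr_map -mulmxA restr_sel_tr_mul.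
  case Ps: (P s); first by rewrite mulmx1.
  rewrite mulmx0; case Pr: (P r); last by apply: mx_eq_nrows0; rewrite /restr_dim Pr.
  by apply: mx_eq_ncols0; apply: upP le_rs Pr (negbT Ps).
- move=> r s le_rs /=; rewrite /restr_map !mulmxA restr_sel_tr_mul /=.
  case Pr: (P r) => /=; last by rewrite mul1mx.
  rewrite !mul0mx; case Ps: (P s).
    by apply: mx_eq_ncols0; rewrite /restr_dim /= Ps.
  by rewrite [Defs.pmap M le_rs](mx_eq_ncols0 _ 0 (upP le_rs Pr (negbT Ps))) mul0mx.
- by move=> r; rewrite /row_free rank_pid_mx // restr_dim_le.
- by move=> r; rewrite /row_full mxrank_tr rank_pid_mx // restr_dim_le.
- move=> r.
  have sub_ker : (restr_sel M P r <= kermx (restr_sel M (predC P) r)^T)%MS.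
    rewrite sub_kermx tr_pid_mx mul_pid_mx /restr_dim /=.
    by case: (P r) => /=; rewrite ?minn0 ?min0n pid_mx_0.
  rewrite -(eq_leqif (mxrank_leqif_eq sub_ker)) mxrank_ker mxrank_tr.
  rewrite !rank_pid_mx ?restr_dim_le // /restr_dim /=.
  by case: (P r) => /=; rewrite ?subn0 ?subnn.
Qed.

End RestrictionSes.

Lemma exists_maximal_support M : (exists r, pdim M r != 0%N) ->
  exists2 q, pdim M q != 0%N & forall s, (q <= s)%O -> pdim M s != 0%N -> s = q.
Proof.
case=> r0 Mr0; pose down x := #|[pred y : Q | (y <= x)%O]|.
have [q Mq qmax] := @arg_maxnP Q r0 (fun x => pdim M x != 0%N) down Mr0.
exists q => // s le_qs Ms; apply/eqP; apply: contraTT (qmax s Ms) => sq.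
rewrite -ltnNge; apply: proper_card; apply/properP; split.
  by apply/fintype.subsetP => y; rewrite !inE => /le_trans; apply.
exists s; rewrite inE ?lexx //.
by apply: contra sq => le_sq; rewrite eq_le le_sq.
Qed.

End PersistenceModules.

Local Open Scope ereal_scope.

Section AdditiveAmplitudes.
Variables (F : fieldType) (d : Order.disp_t) (Q : finPOrderType d) (R : realType).
Implicit Types (A B C M : pmod F Q) (alpha beta : pmod F Q -> \bar R).

Lemma additive_amplitude_of_ses alpha :
  (forall M, 0 <= alpha M) -> (forall M, is_zero_pmod M -> alpha M = 0) ->
  (forall A B C, is_ses A B C -> alpha B = alpha A + alpha C) ->
  is_additive_amplitude alpha.
Proof.
move=> alpha_ge0 alpha0 alphaD; split=> //; split=> // A B C ses.
by rewrite (alphaD _ _ _ ses); split; [apply: leeDl | apply: leeDr |].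
Qed.

Section Uniqueness.
Variables alpha beta : pmod F Q -> \bar R.
Hypotheses (alphaP : is_additive_amplitude alpha) (betaP : is_additive_amplitude beta).
Hypothesis eq_skyscraper1 : forall q, alpha (skyscraper F q 1) = beta (skyscraper F q 1).

Let eq_zero M : is_zero_pmod M -> alpha M = beta M.
Proof.
by case: alphaP betaP => -[_ alpha0 _] _ [[_ beta0 _] _] M0; rewrite alpha0 ?beta0.
Qed.

Let eq_ses A B C :
  is_ses A B C -> alpha A = beta A -> alpha C = beta C -> alpha B = beta B.
Proof.
case: alphaP betaP => [_ alphaD] [_ betaD] ses.
by rewrite (alphaD _ _ _ ses) (betaD _ _ _ ses) => -> ->.
Qed.

Lemma additive_amplitude_eq_supported M q : supported_at M q -> alpha M = beta M.
Proof.
move Mq : (pdim M q) => k; elim: k M Mq => [|k IHk] M Mq suppM.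
  by apply: eq_zero => r; have [-> | /suppM] := eqVneq r q.
apply: (@eq_ses (skyscraper F q k) _ (skyscraper F q 1)); last exact: eq_skyscraper1.
- apply: (supported_at_ses (skyscraper_supported F k) suppM
                            (skyscraper_supported F 1)).
  by rewrite !pdim_skyscraper Mq addn1.
- by apply: IHk; [apply: pdim_skyscraper | apply: skyscraper_supported].
Qed.

Lemma additive_amplitude_eq M : alpha M = beta M.
Proof.
have [n] := ubnP (total_dim M); elim: n M => // n IHn M lt_Mn.
have [/forallP M0 | /forallPn suppM] := boolP [forall r, pdim M r == 0%N].
  by apply: eq_zero => r; apply/eqP.
have [q Mq qmax] := exists_maximal_support suppM.
have upq : up_closed_in M (pred1 q).
  move=> r s le_rs /eqP er sq; subst r; apply/eqP/negPn/negP => Ms.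
  by rewrite /= (qmax s le_rs Ms) eqxx in sq.
pose N1 := restr (up_closed_convex upq); pose N2 := restr (up_closed_convexC upq).
have ses : is_ses N1 M N2 := restr_ses upq.
have N1q : pdim N1 q = pdim M q by rewrite /= /restr_dim /= eqxx.
apply: (eq_ses ses).
- apply: (@additive_amplitude_eq_supported _ q) => r rq.
  by rewrite /= /restr_dim /= (negbTE rq).
- apply: IHn; have := total_dim_ses ses; have := pdim_le_total_dim N1 q.
  by rewrite N1q; move: Mq lt_Mn; lia.
Qed.

End Uniqueness.
End AdditiveAmplitudes.

Local Open Scope classical_set_scope.

Section FiniteSumMeasure.
Context d (T : measurableType d) (R : realType) (I : finType).
Variable m : I -> {measure set T -> \bar R}.

Definition mfinsum (A : set T) : \bar R := \sum_(i : I) m i A.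

Let mfinsum0 : mfinsum set0 = 0.
Proof. by rewrite /mfinsum big1 // => i _; rewrite measure0. Qed.

Let mfinsum_ge0 A : 0 <= mfinsum A.
Proof. exact: sume_ge0. Qed.

Let mfinsum_sigma_additive : semi_sigma_additive mfinsum.
Proof.
move=> A mA tA mUA; rewrite [X in _ --> X](_ : _ =
    lim ((fun n => \sum_(0 <= k < n) mfinsum (A k)) @ \oo)).
  by apply: is_cvg_ereal_nneg_natsum => k _; apply: sume_ge0.
rewrite nneseries_sum //; apply: eq_bigr => i _.
exact: measure_semi_bigcup.
Qed.

HB.instance Definition _ := isMeasure.Build _ _ _ mfinsum
  mfinsum0 mfinsum_ge0 mfinsum_sigma_additive.

End FiniteSumMeasure.

Lemma eseries1 (R : realType) : \sum_(0 <= k <oo) (1 : \bar R) = +oo.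
Proof.
apply: cvg_lim => //.
rewrite (_ : (fun n => _) = (fun n => n%:R%:E)); first exact/cvgenyP.
by apply/funext => n; rewrite sumEFin sumr_const_nat subn0.
Qed.

Section WeightedDirac.
Context d (T : measurableType d) (R : realType).

(* Only nonnegative weights are meant; a real weight [r] acts as [`|r|] and
   [-oo] as [+oo]. *)
Definition wdirac (a : T) (x : \bar R) : {measure set T -> \bar R} :=
  match x with
  | r%:E => mscale (`|r|%:nng)%R \d_a
  | _ => mseries (fun=> \d_a) 0
  end.

Lemma wdiracE a x A : 0 <= x -> wdirac a x A = x * \d_a A.
Proof.
case: x => [r | | //] /= x_ge0; first by rewrite /mscale /= ger0_norm // -lee_fin.
rewrite /mseries diracE (eq_eseriesr (fun k _ => @diracE _ _ R a A)).
by case: (a \in A); rewrite /= ?mule1 ?eseries1 ?mule0 ?eseries0.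
Qed.

End WeightedDirac.

Section DiscreteMeasures.
Context (d : Order.disp_t) (Q : finPOrderType d) (q0 : Q) (R : realType).
Implicit Types mu : {measure set discr q0 -> \bar R}.

Definition point_measure (w : Q -> \bar R) : {measure set discr q0 -> \bar R} :=
  mfinsum (fun q : Q => wdirac (q : discr q0) (w q)).

Lemma point_measure_set1 w : (forall q, 0 <= w q) ->
  forall r : discr q0, point_measure w [set r] = w r.
Proof.
move=> w_ge0 r; rewrite /= /mfinsum (bigD1 r) //= big1 ?adde0.
  by rewrite wdiracE // diracE in_set1 eqxx mule1.
by move=> q qr; rewrite wdiracE // diracE in_set1 (negbTE qr) mule0.
Qed.

Lemma discr_measure_ext mu mu' :
  (forall r : discr q0, mu [set r] = mu' [set r]) -> forall A, mu A = mu' A.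
Proof.
move=> eq_mu A; have -> : A = \bigcup_(r in A) [set r] by rewrite bigcup_imset1 image_id.
have finA : finite_set A := @finite_finset Q A.
have trivA : trivIset A (fun r => [set r]) by move=> i j _ _ [x [/= <- <-]].
by rewrite !measure_fin_bigcup //; apply: eq_fsbigr => r _; apply: eq_mu.
Qed.

End DiscreteMeasures.

Section DimensionIntegral.
Context (F : fieldType) (d : Order.disp_t) (Q : finPOrderType d) (q0 : Q).
Context (R : realType) (mu : {measure set discr q0 -> \bar R}).

Definition integral_dim (M : pmod F Q) : \bar R :=
  \int[mu]_(q in [set: discr q0]) ((pdim M q)%:R)%:E.

Lemma integral_dim_additive_amplitude : is_additive_amplitude integral_dim.
Proof.
apply: additive_amplitude_of_ses => [M | M M0 | A B C ses].
- by apply: integral_ge0 => q _; rewrite lee_fin ler0n.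
- by rewrite /integral_dim (eq_integral (cst 0)) ?integral0 // => q _; rewrite M0.
- rewrite /integral_dim -ge0_integralD //.
  by apply: eq_integral => q _; rewrite (ses_pdim ses q) natrD EFinD.
Qed.

Lemma integral_dim_skyscraper1 (r : discr q0) :
  integral_dim (skyscraper F r 1) = mu [set r].
Proof.
rewrite /integral_dim (eq_integral (fun q => (\1_[set r] q)%:E)).
  by rewrite integral_indic ?setIT.
by move=> q _; rewrite indicE in_set1 /= /sky_dim; case: (q == r).
Qed.

End DimensionIntegral.

Theorem mainTheorem2 (F : fieldType) (R : realType) (d : Order.disp_t)
    (Q : finPOrderType d) (q0 : Q) :
  (forall mu : {measure set (discr q0) -> \bar R},
     is_additive_amplitude
       (fun M : pmod F Q =>
          \int[mu]_(q in [set: discr q0]) ((pdim M q)%:R)%:E)) /\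
  (forall alpha : pmod F Q -> \bar R,
     is_additive_amplitude alpha ->
     exists mu : {measure set (discr q0) -> \bar R},
       (forall M : pmod F Q,
          alpha M = \int[mu]_(q in [set: discr q0]) ((pdim M q)%:R)%:E) /\
       (forall mu' : {measure set (discr q0) -> \bar R},
          (forall M : pmod F Q,
             alpha M = \int[mu']_(q in [set: discr q0]) ((pdim M q)%:R)%:E) ->
          forall A : set (discr q0), mu' A = mu A)).
Proof.
split=> [mu | alpha alphaP]; first exact: integral_dim_additive_amplitude.
have alpha_ge0 q : 0 <= alpha (skyscraper F q 1) by case: alphaP => -[].
pose mu := point_measure q0 (fun q => alpha (skyscraper F q 1)).
have mu_skyscraper1 q : integral_dim mu (skyscraper F q 1) = alpha (skyscraper F q 1).
  by rewrite integral_dim_skyscraper1 point_measure_set1.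
exists mu; split=> [M | mu' alpha_mu'].
  apply: additive_amplitude_eq alphaP (integral_dim_additive_amplitude F mu) _ M.
  by move=> q; rewrite mu_skyscraper1.
apply: discr_measure_ext => r.
by rewrite -!(integral_dim_skyscraper1 F) mu_skyscraper1; apply/esym/alpha_mu'.
Qed.
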